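(* Let $g:\mathbb{R}\to\mathbb{R}$ be continuously differentiable, even ($g(x)=g(-x)$ for all $x$) and $\pi$-periodic ($g(x+\pi)=g(x)$ for all $x$). Let $n\ge 1$ and for $\vec{\mu}=(\mu_0,\dots,\mu_{n-1})\in\mathbb{R}^n$ define $$G(\vec{\mu})=\frac{1}{\pi}\int_{-\pi/2}^{\pi/2}\prod_{i=0}^{n-1} g(x+\mu_i)\,dx.$$ For $i\in\{0,\dots,n-1\}$ let $\mathcal{N}_i=\{0,\dots,n-1\}\setminus\{i\}$. Then for every $i$ and every $\vec\mu$, $$\frac{\partial G}{\partial \mu_i}(\vec{\mu})=\frac{1}{2\pi}\int_{-\pi/2}^{\pi/2} g'(x)\Big\{\prod_{j\in\mathcal{N}_i} g(x+\mu_j-\mu_i)-\prod_{j\in\mathcal{N}_i} g(x-\mu_j+\mu_i)\Big\}\,dx.$$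
   Context: $g(x)$ models the probability of not detecting a target observed at angle $x$; $G(\vec\mu)$ is the average (over a uniformly distributed target orientation) probability of no detection after $n$ independent observations at relative angles $\mu_0,\dots,\mu_{n-1}$. *)

From Stdlib Require Import Reals List Arith.
From Coquelicot Require Import Coquelicot.
Open Scope R_scope.

Definition prodR (l : list nat) (f : nat -> R) : R :=
  fold_right Rmult 1 (map f l).

Definition idx (n : nat) : list nat := seq 0 n.

Definition idx_except (n i : nat) : list nat :=
  filter (fun j => negb (Nat.eqb j i)) (seq 0 n).

(* a vector mu in R^n is represented by mu : nat -> R, only entries 0..n-1 matter *)
Definition update (mu : nat -> R) (i : nat) (t : R) : nat -> R :=
  fun j => if Nat.eqb j i then t else mu j.

Definition Gfun (g : R -> R) (n : nat) (mu : nat -> R) : R :=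
  / PI * RInt (fun x => prodR (idx n) (fun i => g (x + mu i))) (- (PI / 2)) (PI / 2).

(* Isolating the factor g(x + mu_i), G is (1/pi) * int g(x + t) P(x) dx with P independent of
   t = mu_i, so differentiating under the integral gives (1/pi) * int g'(x + mu_i) P(x) dx.
   Translating by -mu_i, which does not change an integral over a full period, turns it into
   I = (1/pi) * int g'(x) Q(x) dx with Q the first product of the statement.  Reflecting x -> -x,
   g' is odd and g is even, so the integral of g' against the second product equals -pi * I;
   hence I is half the difference of the two integrals. *)
From Stdlib Require Import Reals List Arith Lia Lra.
From Coquelicot Require Import Coquelicot.
Open Scope R_scope.

Lemma prodR_app (l1 l2 : list nat) (f : nat -> R) :
  prodR (l1 ++ l2) f = prodR l1 f * prodR l2 f.
Proof.
  induction l1 as [|x l IH]; unfold prodR in *; simpl; [ring | rewrite IH; ring].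
Qed.

Lemma prodR_ext (l : list nat) (f h : nat -> R) :
  (forall j, In j l -> f j = h j) -> prodR l f = prodR l h.
Proof.
  intros H; unfold prodR; f_equal; apply map_ext_in, H.
Qed.

Lemma in_idx_except_neq (n i j : nat) : In j (idx_except n i) -> j <> i.
Proof.
  unfold idx_except; intros Hj; apply filter_In in Hj as [_ Hj].
  destruct (Nat.eqb_spec j i); [discriminate | assumption].
Qed.

Lemma prodR_idx_split (n i : nat) (f : nat -> R) :
  (i < n)%nat -> prodR (idx n) f = f i * prodR (idx_except n i) f.
Proof.
  induction n as [|n IH]; intros Hi; [lia |].
  unfold idx, idx_except in *; rewrite seq_S, filter_app, !prodR_app; simpl.
  destruct (Nat.eqb_spec n i) as [<- | Hni].
  - assert (Hfilter : filter (fun j => negb (Nat.eqb j n)) (seq 0 n) = seq 0 n).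
    { apply forallb_filter_id, forallb_forall; intros j Hj; apply in_seq in Hj.
      apply Bool.negb_true_iff, Nat.eqb_neq; lia. }
    rewrite Hfilter; unfold prodR; simpl; ring.
  - rewrite IH by lia; unfold prodR; simpl; ring.
Qed.

Lemma continuous_prodR (l : list nat) (F : nat -> R -> R) (x : R) :
  (forall j, continuous (F j) x) -> continuous (fun y => prodR l (fun j => F j y)) x.
Proof.
  intros H; induction l as [|a l IH]; unfold prodR in *; simpl.
  - apply continuous_const.
  - apply (continuous_mult (F a) (fun y => fold_right Rmult 1 (map (fun j => F j y) l)));
      auto.
Qed.

Lemma continuous_translate (f : R -> R) (c x : R) :
  continuous f (x + c) -> continuous (fun y => f (y + c)) x.
Proof.
  intros Hf; apply (continuous_comp (fun y => y + c) f); [| exact Hf].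
  apply (continuous_plus (fun y : R => y) (fun _ => c));
    [apply continuous_id | apply continuous_const].
Qed.

Lemma continuous_reflect (f : R -> R) (x : R) :
  continuous f (- x) -> continuous (fun y => f (- y)) x.
Proof.
  intros Hf; apply (continuous_comp (fun y => - y) f); [| exact Hf].
  apply (continuous_opp (fun y : R => y)), continuous_id.
Qed.

Lemma ex_RInt_cont (f : R -> R) (a b : R) :
  (forall x, continuous f x) -> ex_RInt f a b.
Proof.
  intros Hf; apply (ex_RInt_continuous (V := R_CompleteNormedModule)); auto.
Qed.

Lemma RInt_comp_plus (f : R -> R) (c a b : R) :
  (forall x, continuous f x) -> RInt (fun y => f (y + c)) a b = RInt f (a + c) (b + c).
Proof.
  intros Hf.
  assert (E := RInt_comp_lin f 1 c a b (ex_RInt_cont _ _ _ Hf)).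
  rewrite !Rmult_1_l in E; rewrite <- E.
  apply RInt_ext; intros y _; unfold scal; simpl; unfold mult; simpl.
  rewrite Rmult_1_l, Rmult_1_l; reflexivity.
Qed.

Lemma RInt_periodic_translate (h : R -> R) (T a m : R) :
  (forall x, continuous h x) -> (forall x, h (x + T) = h x) ->
  RInt (fun x => h (x + m)) a (a + T) = RInt h a (a + T).
Proof.
  intros Hc Hp; rewrite RInt_comp_plus by exact Hc.
  assert (ex : forall u v, ex_RInt h u v) by (intros; apply ex_RInt_cont, Hc).
  (* [a+m, a+T+m] = [a+m, a+T] followed by a translate of [a, a+m] by one period *)
  rewrite <- (RInt_Chasles h (a + m) (a + T) (a + T + m)) by auto.
  replace (a + T + m) with ((a + m) + T) by ring.
  rewrite <- (RInt_comp_plus h T a (a + m)) by exact Hc.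
  rewrite (RInt_ext (fun y => h (y + T)) h) by (intros; apply Hp).
  rewrite Rplus_comm; apply (RInt_Chasles (V := R_CompleteNormedModule)); auto.
Qed.

Lemma ex_RInt_comp_opp_sym (h : R -> R) (c : R) :
  ex_RInt h (- c) c -> ex_RInt (fun x => h (- x)) (- c) c.
Proof.
  intros Hh; assert (H := ex_RInt_comp_opp (V := R_NormedModule) h c (- c)).
  rewrite Ropp_involutive in H; apply ex_RInt_swap in H; [| exact Hh].
  apply (ex_RInt_ext (fun x => opp (opp (h (- x))))); [intros; apply opp_opp |].
  apply (ex_RInt_opp (V := R_NormedModule)), H.
Qed.

Lemma RInt_comp_opp_sym (h : R -> R) (c : R) :
  ex_RInt h (- c) c -> RInt (fun x => h (- x)) (- c) c = RInt h (- c) c.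
Proof.
  intros Hh.
  assert (Hrefl := ex_RInt_comp_opp_sym h c Hh).
  assert (E : RInt (fun x => opp (h (- x))) (- c) c = RInt h c (- c)).
  { apply is_RInt_unique; rewrite <- (Ropp_involutive c) at 2.
    apply (is_RInt_comp_opp (V := R_NormedModule) h).
    rewrite Ropp_involutive; apply (RInt_correct (V := R_CompleteNormedModule)).
    apply ex_RInt_swap, Hh. }
  rewrite <- (opp_RInt_swap h) in E by exact Hh.
  rewrite (RInt_opp (V := R_CompleteNormedModule)) in E by exact Hrefl.
  apply (f_equal (@opp R_AbelianGroup)) in E; rewrite !opp_opp in E; exact E.
Qed.

Lemma Derive_periodic (g : R -> R) (T x : R) :
  (forall x, ex_derive g x) -> (forall x, g (x + T) = g x) ->
  Derive g (x + T) = Derive g x.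
Proof.
  intros Hd Hp; symmetry; apply is_derive_unique.
  apply (is_derive_ext (fun y => g (y + T))); [intros; apply Hp |].
  auto_derive; [apply Hd | change (fun y => g y) with g; ring].
Qed.

Lemma Derive_even (g : R -> R) (x : R) :
  (forall x, ex_derive g x) -> (forall x, g x = g (- x)) ->
  Derive g (- x) = - Derive g x.
Proof.
  intros Hd He.
  enough (H : Derive g x = - Derive g (- x)) by lra.
  apply is_derive_unique, (is_derive_ext (fun y => g (- y))); [intros; symmetry; apply He |].
  auto_derive; [apply Hd | change (fun y => g y) with g; ring].
Qed.

Lemma is_derive_RInt_translate (k p : R -> R) (a b t : R) :
  (forall x, ex_derive k x) -> (forall x, continuous (Derive k) x) ->
  (forall x, continuous p x) ->
  is_derive (fun s => RInt (fun x => k (x + s) * p x) a b) t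
    (RInt (fun x => Derive k (x + t) * p x) a b).
Proof.
  intros Hd Hd' Hp.
  assert (Hk : forall x, continuous k x)
    by (intros; apply (ex_derive_continuous (K := R_AbsRing) (V := R_NormedModule)); auto).
  assert (Hpartial : forall s x, Derive (fun u => k (x + u) * p x) s = Derive k (x + s) * p x).
  { intros s x; apply is_derive_unique; auto_derive; [apply Hd | change (fun y => k y) with k; ring]. }
  rewrite (RInt_ext _ (fun x => Derive (fun u => k (x + u) * p x) t))
    by (intros; symmetry; apply Hpartial).
  apply (is_derive_RInt_param (fun s x => k (x + s) * p x)).
  - apply filter_forall; intros s x _; auto_derive; apply Hd.
  - intros x _; apply (continuity_2d_pt_ext (fun s y => Derive k (y + s) * p y)).
    { intros; symmetry; apply Hpartial. }
    apply continuity_2d_pt_mult.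
    + apply (continuity_1d_2d_pt_comp (Derive k) (fun s y => y + s)).
      * apply continuity_pt_filterlim, Hd'.
      * apply continuity_2d_pt_plus; [apply continuity_2d_pt_id2 | apply continuity_2d_pt_id1].
    + apply (continuity_1d_2d_pt_comp p (fun s y => y)).
      * apply continuity_pt_filterlim, Hp.
      * apply continuity_2d_pt_id2.
  - apply filter_forall; intros s; apply ex_RInt_cont; intros x.
    apply (continuous_mult (fun y => k (y + s)) p); [apply continuous_translate, Hk | apply Hp].
Qed.

Lemma Gfun_update (g : R -> R) (n i : nat) (mu : nat -> R) (t : R) :
  (i < n)%nat ->
  Gfun g n (update mu i t)
  = / PI * RInt (fun x => g (x + t) * prodR (idx_except n i) (fun j => g (x + mu j)))
                (- (PI / 2)) (PI / 2).
Proof.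
  intros Hi; unfold Gfun; f_equal; apply RInt_ext; intros x _.
  rewrite (prodR_idx_split n i) by exact Hi.
  unfold update at 1; rewrite Nat.eqb_refl; f_equal.
  apply prodR_ext; intros j Hj; unfold update.
  apply in_idx_except_neq, Nat.eqb_neq in Hj; rewrite Hj; reflexivity.
Qed.

Section EvenPeriodicDerivative.

Variable g : R -> R.
Hypothesis g_diff : forall x, ex_derive g x.
Hypothesis g'_cont : forall x, continuous (Derive g) x.

Lemma RInt_Derive_translate_period (q : R -> R) (T a m : R) :
  (forall x, g (x + T) = g x) ->
  (forall x, continuous q x) -> (forall x, q (x + T) = q x) ->
  RInt (fun x => Derive g (x + m) * q (x + m)) a (a + T)
  = RInt (fun x => Derive g x * q x) a (a + T).
Proof.
  intros g_per Hc Hp.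
  apply (RInt_periodic_translate (fun x => Derive g x * q x)).
  - intros x; apply (continuous_mult (Derive g) q); auto.
  - intros x; rewrite Derive_periodic, Hp by assumption; reflexivity.
Qed.

Lemma RInt_Derive_reflect (q : R -> R) (c : R) :
  (forall x, g x = g (- x)) -> (forall x, continuous q x) ->
  RInt (fun x => Derive g x * q (- x)) (- c) c = - RInt (fun x => Derive g x * q x) (- c) c.
Proof.
  intros g_even Hc.
  assert (Hh : ex_RInt (fun x => Derive g x * q x) (- c) c).
  { apply ex_RInt_cont; intros x; apply (continuous_mult (Derive g) q); auto. }
  rewrite <- (RInt_comp_opp_sym _ c Hh), <- (RInt_opp (V := R_CompleteNormedModule)).
  - apply RInt_ext; intros x _; rewrite Derive_even by assumption.
    unfold opp; simpl; ring.
  - exact (ex_RInt_comp_opp_sym (fun x => Derive g x * q x) c Hh).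
Qed.

Lemma RInt_Derive_translate_antisym (q : R -> R) (m : R) :
  (forall x, g x = g (- x)) -> (forall x, g (x + PI) = g x) ->
  (forall x, continuous q x) -> (forall x, q (x + PI) = q x) ->
  RInt (fun x => Derive g (x + m) * q (x + m)) (- (PI / 2)) (PI / 2)
  = / 2 * RInt (fun x => Derive g x * (q x - q (- x))) (- (PI / 2)) (PI / 2).
Proof.
  intros g_even g_per Hc Hp.
  replace (PI / 2) with (- (PI / 2) + PI) at 2 by field.
  rewrite RInt_Derive_translate_period by auto.
  replace (- (PI / 2) + PI) with (PI / 2) by field.
  symmetry; rewrite (RInt_ext _ (fun x => minus (Derive g x * q x) (Derive g x * q (- x))))
    by (intros; unfold minus, plus, opp; simpl; ring).
  assert (Hint : forall f : R -> R, (forall x, continuous f x) ->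
                 ex_RInt (fun x => Derive g x * f x) (- (PI / 2)) (PI / 2)).
  { intros f Hf; apply ex_RInt_cont; intros x; apply (continuous_mult (Derive g) f); auto. }
  rewrite (RInt_minus (V := R_CompleteNormedModule)) by
    (apply Hint; first [exact Hc | intros x; apply continuous_reflect, Hc]).
  rewrite RInt_Derive_reflect by assumption.
  unfold minus, plus, opp; simpl; field.
Qed.

End EvenPeriodicDerivative.

Theorem lemma3p1 (g : R -> R)
  (g_diff : forall x, ex_derive g x)
  (g'_cont : forall x, continuous (Derive g) x)
  (g_even : forall x, g x = g (- x))
  (g_per : forall x, g (x + PI) = g x)
  (n : nat) (hn : (1 <= n)%nat) (i : nat) (hi : (i < n)%nat) (mu : nat -> R) :
  is_derive (fun t => Gfun g n (update mu i t)) (mu i)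
    (/ (2 * PI) * RInt (fun x => Derive g x *
        (prodR (idx_except n i) (fun j => g (x + mu j - mu i))
         - prodR (idx_except n i) (fun j => g (x - mu j + mu i))))
      (- (PI / 2)) (PI / 2)).
Proof.
  set (N := idx_except n i); set (m := mu i).
  set (P := fun x => prodR N (fun j => g (x + mu j))).
  set (Q := fun x => prodR N (fun j => g (x + mu j - m))).
  assert (g_cont : forall x, continuous g x)
    by (intros; apply (ex_derive_continuous (K := R_AbsRing) (V := R_NormedModule)); auto).
  assert (Q_cont : forall x, continuous Q x).
  { intros x; apply (continuous_prodR N (fun j y => g (y + mu j - m))); intros j.
    apply (continuous_ext (fun y => g (y + (mu j - m)))); [intros; f_equal; ring |].
    apply continuous_translate, g_cont. }
  assert (P_Q : forall x, P x = Q (x + m))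
    by (intros x; apply prodR_ext; intros; f_equal; ring).
  assert (Q_per : forall x, Q (x + PI) = Q x).
  { intros x; apply prodR_ext; intros j _.
    replace (x + PI + mu j - m) with (x + mu j - m + PI) by ring; apply g_per. }
  assert (Q_reflect : forall x, prodR N (fun j => g (x - mu j + m)) = Q (- x)).
  { intros x; apply prodR_ext; intros j _; rewrite g_even; f_equal; ring. }
  apply (is_derive_ext (fun t => / PI * RInt (fun x => g (x + t) * P x) (- (PI / 2)) (PI / 2))).
  { intros; symmetry; apply Gfun_update, hi. }
  replace (/ (2 * PI) * _) with (/ PI * RInt (fun x => Derive g (x + m) * P x) (- (PI / 2)) (PI / 2)).
  { apply is_derive_scal, is_derive_RInt_translate; auto.
    intros x; apply (continuous_ext (fun x => Q (x + m))); [intros; symmetry; apply P_Q |].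
    apply continuous_translate, Q_cont. }
  rewrite (RInt_ext _ (fun x => Derive g (x + m) * Q (x + m))) by (intros; rewrite P_Q; reflexivity).
  rewrite RInt_Derive_translate_antisym by auto.
  rewrite (RInt_ext (fun x => Derive g x * (Q x - Q (- x))) _)
    by (intros; rewrite <- Q_reflect; reflexivity).
  unfold Q; field; apply PI_neq0.
Qed.
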